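(* Let $E$ be the elliptic curve $Y^2+11Y=X^3+11X^2+33X$ over $\mathbb{Q}$, and let $j:E\to\mathbb{P}^1$ be the rational function $$j(X,Y)=\frac{h(X,Y)}{(XY-11)^{11}},$$ where $h(X,Y)=(X^2+11X+22)^3\big((11X^2+88X+121)Y+2X^4+55X^3+451X^2+1452X+1452\big)^3 g(X,Y)$ and $g(X,Y)=(6750X^8+337590X^7+5159935X^6+36807958X^5+145636931X^4+341425458X^3+474292533X^2+362189058X+117523307)Y+51975X^9+1746052X^8+24440064X^7+188870352X^6+892661770X^5+2692703508X^4+5217583888X^3+6299026712X^2+4320837279X+1288408000$. Then for every rational point $(x,y)\in E(\mathbb{Q})$ (affine), $j(x,y)\in\mathbb{Z}$ if and only if $\frac{x}{xy-11}\in\mathbb{Z}$.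
   Context: Under an isomorphism (Halberstadt's) between $E$ and the modular curve $X_{ns}(11)$ (normalizer of a non-split Cartan subgroup of level $11$) sending the cusps to the zeros of $Y-11/X$, the function $j$ above is the natural $j$-invariant map of degree $55$. The statement to prove concerns only the explicit rational function given. Here $j(x,y)\in\mathbb{Z}$ means the value is finite and integral; similarly for $x/(xy-11)$. *)

From HB Require Import structures.
From mathcomp Require Import all_boot all_order all_algebra.
From Stdlib Require Import BinNums NArith.
Set Implicit Arguments. Unset Strict Implicit. Unset Printing Implicit Defensive.
Import Order.TTheory GRing.Theory Num.Theory.
Local Open Scope ring_scope.


(* Binary-encoded nonnegative integer constants as rationals (the unary
   nat numerals of ring_scope are too large for these coefficients). *)
Fixpoint posq (p : BinNums.positive) : rat :=
  match p with
  | BinNums.xH => 1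
  | BinNums.xO p => 2 * posq p
  | BinNums.xI p => 2 * posq p + 1
  end.
Definition nq (n : N) : rat := match n with BinNums.N0 => 0 | BinNums.Npos p => posq p end.

Definition onE (x y : rat) : Prop :=
  y ^+ 2 + 11 * y = x ^+ 3 + 11 * x ^+ 2 + 33 * x.

Definition g_poly (X Y : rat) : rat :=
  ((nq 6750) * X ^+ 8 + (nq 337590) * X ^+ 7 + (nq 5159935) * X ^+ 6 + (nq 36807958) * X ^+ 5
   + (nq 145636931) * X ^+ 4 + (nq 341425458) * X ^+ 3 + (nq 474292533) * X ^+ 2
   + (nq 362189058) * X + (nq 117523307)) * Y
  + (nq 51975) * X ^+ 9 + (nq 1746052) * X ^+ 8 + (nq 24440064) * X ^+ 7 + (nq 188870352) * X ^+ 6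
  + (nq 892661770) * X ^+ 5 + (nq 2692703508) * X ^+ 4 + (nq 5217583888) * X ^+ 3
  + (nq 6299026712) * X ^+ 2 + (nq 4320837279) * X + (nq 1288408000).

Definition h_poly (X Y : rat) : rat :=
  (X ^+ 2 + 11 * X + 22) ^+ 3
  * ((11 * X ^+ 2 + 88 * X + 121) * Y
     + 2 * X ^+ 4 + 55 * X ^+ 3 + 451 * X ^+ 2 + (nq 1452) * X + (nq 1452)) ^+ 3
  * g_poly X Y.

Definition j_val (X Y : rat) : rat := h_poly X Y / (X * Y - 11) ^+ 11.

(* "j(x,y) is finite and integral". *)
Definition j_integral (x y : rat) : Prop :=
  x * y - 11 <> 0 /\ j_val x y \is a Num.int.

Definition u_integral (x y : rat) : Prop :=
  x * y - 11 <> 0 /\ x / (x * y - 11) \is a Num.int.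

(* Every affine rational point of E can be written (X, Y) = (a/d^2, b/d^3)
   with integers a, b, d, d > 0 and gcd(a,d) = gcd(b,d) = 1; clearing
   denominators by weight, XY - 11 = T/d^5 with T = ab - 11 d^5, the
   numerator of j becomes H/d^55 with H = F1^3 F2^3 G (homogenised factors),
   so that j = H / T^11 and x/(xy - 11) = a d^3 / T.  The theorem thus
   becomes the divisibility statement  T^11 | H  <->  T | a d^3  in Z.
   Both sides are shown equivalent to  T | 11:
   - explicit certificates express 11^k d^l as a combination of each factor
     of H, the curve equation and T; hence T | H forces T | 11^20 d^119, so
     T | 11^20, and since 121 never divides T (an 11-adic argument on the
     curve), T | 11;
   - T | a d^3 gives T | a, hence T | 11 d^5, hence T | 11;
   - conversely if T | 11 then either T is a unit or 11 | T, in which case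
     11 divides a and b and the certificates of 11-divisibility give
     11^11 | H and 11 | a. *)

From Stdlib Require Import ZArith Znumtheory Zpow_facts Lia.
From HB Require Import structures.
From mathcomp Require Import all_boot all_order all_algebra ssrZ ring.
Import Order.TTheory GRing.Theory Num.Theory.
Set Implicit Arguments. Unset Strict Implicit.

Local Open Scope Z_scope.

Lemma prime_11 : Znumtheory.prime 11.
Proof.
apply: prime_intro; first lia.
move=> n hn; apply/Zgcd_1_rel_prime.
have h : n = 1 \/ n = 2 \/ n = 3 \/ n = 4 \/ n = 5 \/ n = 6 \/ n = 7 \/ n = 8
         \/ n = 9 \/ n = 10 by lia.
by do 9 (case: h => [-> // | h]); rewrite h.
Qed.

Lemma dvd_one_of_rel_prime t n : (t | n) -> rel_prime t n -> (t | 1).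
Proof. by move=> htn [_ _ hg]; apply: hg => //; apply: Z.divide_refl. Qed.

Lemma prime_dvd_pow p a n : Znumtheory.prime p -> 0 <= n -> (p | a ^ n) -> (p | a).
Proof.
move=> hp hn hpa; case: (Zdivide_dec p a) => // hna.
have hrel : rel_prime p (a ^ n) by apply: rel_prime_Zpower_r => //; exact: prime_rel_prime.
have := dvd_one_of_rel_prime hpa hrel => /Z.divide_1_r.
have := prime_ge_2 p hp; lia.
Qed.

Lemma dvd_prime_of_dvd_pow p t n :
  Znumtheory.prime p -> 0 <= n -> (t | p ^ n) -> ~ (p * p | t) -> (t | p).
Proof.
move=> hp hn htp hsq.
have unit_of_coprime u : (u | p ^ n) -> ~ (p | u) -> (u | 1).
  move=> hu hpu; apply: (dvd_one_of_rel_prime hu).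
  apply: rel_prime_Zpower_r => //; apply: rel_prime_sym; exact: prime_rel_prime.
case: (Zdivide_dec p t) => [[t0 ht]|hpt]; last first.
  by apply: (Z.divide_trans _ 1); [exact: unit_of_coprime | exact: Z.divide_1_l].
subst t; have ht0 : (t0 | 1).
  apply: unit_of_coprime; first by apply: (Z.divide_trans _ (t0 * p)) => //; exists p; ring.
  by move=> [k hk]; apply: hsq; exists k; rewrite hk; ring.
by rewrite -[X in (_ | X)]Z.mul_1_l; apply: Z.mul_divide_mono_r.
Qed.

Lemma cong_mul t x1 y1 x2 y2 :
  (t | x1 - y1) -> (t | x2 - y2) -> (t | x1 * x2 - y1 * y2).
Proof.
move=> h1 h2; have -> : x1 * x2 - y1 * y2 = (x1 - y1) * x2 + y1 * (x2 - y2) by ring.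
by apply: Z.divide_add_r; [apply: Z.divide_mul_l | apply: Z.divide_mul_r].
Qed.

Lemma dvd_of_cong_product t x1 x2 x3 c1 c2 c3 y1 y2 y3 :
  (t | x1 - c1 * y1) -> (t | x2 - c2 * y2) -> (t | x3 - c3 * y3) ->
  (t | y1 ^ 3 * y2 ^ 3 * y3) -> (t | x1 ^ 3 * x2 ^ 3 * x3).
Proof.
move=> h1 h2 h3 hy.
have cube x z : (t | x - z) -> (t | x ^ 3 - z ^ 3).
  move=> h; have -> : x ^ 3 - z ^ 3 = x * x * x - z * z * z by ring.
  by apply: cong_mul => //; apply: cong_mul.
have hc := cong_mul (cong_mul (cube _ _ h1) (cube _ _ h2)) h3.
have -> : x1 ^ 3 * x2 ^ 3 * x3 =
  (x1 ^ 3 * x2 ^ 3 * x3 - (c1 * y1) ^ 3 * (c2 * y2) ^ 3 * (c3 * y3))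
  + (c1 ^ 3 * c2 ^ 3 * c3) * (y1 ^ 3 * y2 ^ 3 * y3) by ring.
by apply: Z.divide_add_r; [exact: hc | apply: Z.divide_mul_r].
Qed.

(* For X = a/d^2 and Y = b/d^3 the following are the weighted numerators: curveZ = d^6 (Y^2 + 11Y - X^3 - 11X^2 - 33X),
   denZ = d^5 (XY - 11), and f1Z, f2Z, gZ are d^4, d^8, d^19 times the three
   factors of the numerator h of j. *)

Definition curveZ (a b d : Z) : Z :=
  b^2 + 11*b*d^3 - a^3 - 11*a^2*d^2 - 33*a*d^4.
Definition denZ (a b d : Z) : Z := a*b - 11*d^5.
Definition f1Z (a d : Z) : Z := a^2 + 11*a*d^2 + 22*d^4.
Definition f2Z (a b d : Z) : Z :=
  2*a^4 + 55*a^3*d^2 + 11*a^2*b*d + 451*a^2*d^4 + 88*a*b*d^3 + 1452*a*d^6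
  + 121*b*d^5 + 1452*d^8.
Definition gZ (a b d : Z) : Z :=
  51975*a^9*d + 6750*a^8*b + 1746052*a^8*d^3 + 337590*a^7*b*d^2
  + 24440064*a^7*d^5 + 5159935*a^6*b*d^4 + 188870352*a^6*d^7
  + 36807958*a^5*b*d^6 + 892661770*a^5*d^9 + 145636931*a^4*b*d^8
  + 2692703508*a^4*d^11 + 341425458*a^3*b*d^10 + 5217583888*a^3*d^13
  + 474292533*a^2*b*d^12 + 6299026712*a^2*d^15 + 362189058*a*b*d^14
  + 4320837279*a*d^17 + 117523307*b*d^16 + 1288408000*d^19.
Definition hZ (a b d : Z) : Z := f1Z a d ^ 3 * f2Z a b d ^ 3 * gZ a b d.

(* Certificates: modulo the curve equation and denZ, a power of 11 times a
   power of d is a multiple of each factor of hZ. *)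
Lemma f1_cert a b d : 121 * d^12 =
  (8*a^3 + 67*a^2*d^2) * curveZ a b d
  + (8*a^4 + 67*a^3*d^2 + 88*a^2*d^4 - 231*a*d^6 - 363*d^8) * f1Z a d
  + (- 8*a^2*b - 88*a^2*d^3 - 67*a*b*d^2 - 825*a*d^5 - 737*d^7) * denZ a b d.
Proof. rewrite /curveZ /f1Z /denZ; ring. Qed.

Lemma f2_cert a b d : 1331 * d^18 =
  (132*a^6 + 3354*a^5*d^2 + 22748*a^4*d^4 + 56144*a^3*d^6 + 41877*a^2*d^8)
    * curveZ a b d
  + (66*a^5 + 588*a^4*d^2 + 946*a^3*d^4 - 1991*a^2*d^6 - 3806*a*d^8) * f2Z a b d
  + (- 726*a^6*d - 132*a^5*b - 13728*a^5*d^3 - 3354*a^4*b*d^2 - 108482*a^4*d^5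
     - 22748*a^3*b*d^4 - 419617*a^3*d^7 - 56144*a^2*b*d^6 - 765204*a^2*d^9
     - 41877*a*b*d^8 - 502392*a*d^11 - 121*d^13) * denZ a b d.
Proof. rewrite /curveZ /f2Z /denZ; ring. Qed.

Lemma g_cert a b d : 161051 * d^29 =
  (- 4717562850*a^11*d - 144514082482*a^10*d^3 - 1797564675357*a^9*d^5
   - 12168634370123*a^8*d^7 - 50267175423113*a^7*d^9 - 133035637526572*a^6*d^11
   - 227550244686479*a^5*d^13 - 244080838286351*a^4*d^15
   - 149668776051080*a^3*d^17 - 40111057247690*a^2*d^19) * curveZ a b d
  + (- 90766*a^5 - 729680*a^4*d^2 - 842207*a^3*d^4 + 2451108*a^2*d^6
     + 3754333*a*d^8) * gZ a b d
  + (612670500*a^12 + 35567033940*a^11*d^2 + 4717562850*a^10*b*d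
     + 772257420010*a^10*d^4 + 144514082482*a^9*b*d^3 + 9015336267410*a^9*d^6
     + 1797564675357*a^8*b*d^5 + 64932700887890*a^8*d^8
     + 12168634370123*a^7*b*d^7 + 307971305081044*a^7*d^10
     + 50267175423113*a^6*b*d^9 + 992038920150212*a^6*d^12
     + 133035637526572*a^5*b*d^11 + 2187676902618647*a^5*d^14
     + 227550244686479*a^4*b*d^13 + 3257206220429007*a^4*d^16
     + 244080838286351*a^3*b*d^15 + 3134367393337818*a^3*d^18
     + 149668776051080*a^2*b*d^17 + 1761808103658537*a^2*d^20
     + 40111057247690*a*b*d^19 + 439737515624000*a*d^22 - 14641*d^24)
    * denZ a b d.
Proof. rewrite /curveZ /gZ /denZ; ring. Qed.

Lemma f1_eleven a d : f1Z (11*a) d = 11 * (11*a^2 + 11*a*d^2 + 2*d^4).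
Proof. rewrite /f1Z; ring. Qed.

Lemma f2_eleven a b d : f2Z (11*a) (11*b) d = 121 *
  (242*a^4 + 605*a^3*d^2 + 121*a^2*b*d + 451*a^2*d^4 + 88*a*b*d^3
   + 132*a*d^6 + 11*b*d^5 + 12*d^8).
Proof. rewrite /f2Z; ring. Qed.

Lemma g_eleven a b d : gZ (11*a) (11*b) d = 121 *
  (1012845712725*a^9*d + 131538404250*a^8*b + 3093237627172*a^8*d^3
   + 598061277990*a^7*b*d^2 + 3936096747264*a^7*d^5 + 831012691685*a^6*b*d^4
   + 2765250823632*a^6*d^7 + 538905313078*a^5*b*d^6 + 1188132815870*a^5*d^9
   + 193842755161*a^4*b*d^8 + 325817124468*a^4*d^11 + 41312480418*a^3*b*d^10
   + 57393422768*a^3*d^13 + 5217217863*a^2*b*d^12 + 6299026712*a^2*d^15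
   + 362189058*a*b*d^14 + 392803389*a*d^17 + 10683937*b*d^16 + 10648000*d^19).
Proof. rewrite /gZ; ring. Qed.

Lemma cong_of_cert t N A B C e f :
  N = A * e + B * f + C * t -> e = 0 -> (t | N - B * f).
Proof. by move=> -> ->; exists C; ring. Qed.

Section IntegralPoint.

Variables a b d : Z.
Hypothesis had : rel_prime a d.
Hypothesis hbd : rel_prime b d.
Hypothesis hE : curveZ a b d = 0.

Lemma denZ_rel_prime : rel_prime (denZ a b d) d.
Proof.
apply/rel_prime_sym/Zgcd_1_rel_prime.
have -> : denZ a b d = a * b + (-11 * d^4) * d by rewrite /denZ; ring.
rewrite Z.gcd_add_mult_diag_r; apply/Zgcd_1_rel_prime.
by apply: rel_prime_mult; apply: rel_prime_sym.
Qed.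

(* 11 | denZ forces 11 | a and 11 | b (from the curve equation mod 11). *)
Lemma eleven_dvd_ab : (11 | denZ a b d) -> (11 | a) /\ (11 | b).
Proof.
move=> h11.
have hab : (11 | a * b).
  have -> : a * b = denZ a b d + d^5 * 11 by rewrite /denZ; ring.
  by apply: Z.divide_add_r => //; apply: Z.divide_mul_r; apply: Z.divide_refl.
case: (prime_mult 11 prime_11 _ _ hab) => [[k ha]|[k hb]].
- split; first by exists k.
  apply: (prime_dvd_pow (n := 2) prime_11); first lia.
  exists (- b*d^3 + 121*k^3 + 121*k^2*d^2 + 33*k*d^4).
  rewrite -[LHS]Z.sub_0_r -hE /curveZ ha; ring.
- split; last by exists k.
  apply: (prime_dvd_pow (n := 3) prime_11); first lia.
  exists (11*k^2 + 11*k*d^3 - a^2*d^2 - 3*a*d^4).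
  rewrite -[LHS]Z.add_0_r -hE /curveZ hb; ring.
Qed.

Lemma denZ_not_dvd_121 : ~ (11 * 11 | denZ a b d).
Proof.
move=> h121.
have [[a1 ha] [b1 hb]] : (11 | a) /\ (11 | b).
  by apply: eleven_dvd_ab; apply: (Z.divide_trans _ (11 * 11)) => //; exists 11; ring.
have hd : (11 | d).
  apply: (prime_dvd_pow (n := 5) prime_11); first lia.
  apply/(Z.mul_divide_cancel_l _ _ 11); first lia.
  have -> : 11 * d^5 = 11 * 11 * (a1 * b1) - denZ a b d by rewrite /denZ ha hb; ring.
  by apply: Z.divide_sub_r => //; apply: Z.divide_mul_l; apply: Z.divide_refl.
have [_ _ hg] := had.
have : (11 | 1) by apply: hg => //; exists a1.
by move/Z.divide_1_r; lia.
Qed.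

Lemma denZ_dvd_11_of_dvd_hZ : (denZ a b d | hZ a b d) -> (denZ a b d | 11).
Proof.
move=> hH.
have h20 : (denZ a b d | 11^20 * d^119).
  have -> : 11^20 * d^119 = (121 * d^12)^3 * (1331 * d^18)^3 * (161051 * d^29) by ring.
  exact: dvd_of_cong_product (cong_of_cert (f1_cert a b d) hE)
    (cong_of_cert (f2_cert a b d) hE) (cong_of_cert (g_cert a b d) hE) hH.
have h20' : (denZ a b d | 11^20).
  apply: (Gauss _ (d^119)); first by rewrite Z.mul_comm.
  by apply: rel_prime_Zpower_r => //; exact: denZ_rel_prime.
exact: dvd_prime_of_dvd_pow prime_11 _ h20' denZ_not_dvd_121.
Qed.

Lemma denZ_dvd_a_of_dvd_11 : (denZ a b d | 11) -> (11 | denZ a b d) -> (denZ a b d | a).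
Proof. by move=> h h11; apply: (Z.divide_trans _ 11) => //; case: (eleven_dvd_ab h11). Qed.

Lemma denZ_unit : (denZ a b d | 11) -> ~ (11 | denZ a b d) -> (denZ a b d | 1).
Proof.
move=> h h11; apply: (dvd_one_of_rel_prime h).
by apply/rel_prime_sym/prime_rel_prime => //; exact: prime_11.
Qed.

(* T | a d^3 iff T | 11: T is coprime to d, and 11 d^5 = ab - T. *)
Lemma denZ_dvd_ad3 : (denZ a b d | a * d^3) <-> (denZ a b d | 11).
Proof.
have hrel n : 0 <= n -> rel_prime (denZ a b d) (d ^ n).
  by move=> hn; apply: rel_prime_Zpower_r => //; exact: denZ_rel_prime.
split=> h.
- have ha : (denZ a b d | a).
    by apply: (Gauss _ (d^3)); [rewrite Z.mul_comm | apply: hrel; lia].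
  apply: (Gauss _ (d^5)); last by apply: hrel; lia.
  have -> : d^5 * 11 = a * b - denZ a b d by rewrite /denZ; ring.
  by apply: Z.divide_sub_r; [apply: Z.divide_mul_l | apply: Z.divide_refl].
- case: (Zdivide_dec 11 (denZ a b d)) => h11.
  + by apply: Z.divide_mul_l; exact: denZ_dvd_a_of_dvd_11.
  + by apply: (Z.divide_trans _ 1); [exact: denZ_unit | exact: Z.divide_1_l].
Qed.

Lemma denZ_pow_dvd_hZ : (denZ a b d | 11) -> (denZ a b d ^ 11 | hZ a b d).
Proof.
move=> h.
have pow_dvd u v : (u | v) -> (u ^ 11 | v ^ 11).
  by move=> [k ->]; exists (k ^ 11); rewrite Z.pow_mul_l.
case: (Zdivide_dec 11 (denZ a b d)) => h11; last first.
  apply: (Z.divide_trans _ (1 ^ 11)); last exact: Z.divide_1_l.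
  by apply: pow_dvd; exact: denZ_unit.
apply: (Z.divide_trans _ (11 ^ 11)); first exact: pow_dvd.
have [[a1 ->] [b1 ->]] := eleven_dvd_ab h11.
have pow11 q1 q2 q3 : (11 ^ 11 | (11 * q1) ^ 3 * (121 * q2) ^ 3 * (121 * q3)).
  by exists (q1 ^ 3 * q2 ^ 3 * q3); ring.
rewrite /hZ (Z.mul_comm a1) (Z.mul_comm b1) f1_eleven f2_eleven g_eleven.
exact: pow11.
Qed.

Lemma denZ_pow_dvd_hZ_iff : (denZ a b d ^ 11 | hZ a b d) <-> (denZ a b d | a * d^3).
Proof.
rewrite denZ_dvd_ad3; split=> [h|]; last exact: denZ_pow_dvd_hZ.
apply: denZ_dvd_11_of_dvd_hZ; apply: (Z.divide_trans _ (denZ a b d ^ 11)) => //.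
by exists (denZ a b d ^ 10); ring.
Qed.

End IntegralPoint.

Lemma cube_eq_square m s : 0 < m -> 0 < s -> m^3 = s^2 ->
  exists d, 0 < d /\ m = d^2 /\ s = d^3.
Proof.
move=> hm hs hms; set g := Z.gcd m s.
have hg : 0 < g.
  have := Z.gcd_nonneg m s; have : g <> 0 by move/Z.gcd_eq_0; lia.
  rewrite /g; lia.
have em : m = g * (m / g) by apply: Zdivide_Zdiv_eq => //; exact: Z.gcd_divide_l.
have es : s = g * (s / g) by apply: Zdivide_Zdiv_eq => //; exact: Z.gcd_divide_r.
have hrel : rel_prime (m / g) (s / g)
  by apply: Zis_gcd_rel_prime; [lia | lia | exact: Zgcd_is_gcd].
move: (m / g) (s / g) em es hrel => m1 s1 em es hrel.
have e1 : g * m1^3 = s1^2.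
  apply: (Z.mul_reg_l _ _ (g^2)); first lia.
  by have := hms; rewrite em es; lia.
have hm1 : m1 = 1.
  have hm1pos : 0 < m1 by nia.
  suff /Z.divide_1_r : (m1 | 1) by lia.
  apply: (dvd_one_of_rel_prime (n := s1 ^ 2)).
    by exists (g * m1^2); rewrite -e1; ring.
  by apply: rel_prime_Zpower_r.
have eg : g = s1^2 by rewrite -e1 hm1; ring.
exists s1; split; first nia.
by rewrite em es hm1 eg; split; ring.
Qed.

(* The equation of E at (x, y) = (n/m, r/s), multiplied by m^3 s^2. *)
Definition clearedE (n m r s : Z) : Z :=
  m^3 * (r^2 + 11*r*s) - s^2 * (n^3 + 11*n^2 * m + 33*n * m^2).

Lemma integral_model m s n r : 0 < m -> 0 < s -> rel_prime n m -> rel_prime r s ->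
  clearedE n m r s = 0 ->
  exists d, 0 < d /\ m = d^2 /\ s = d^3 /\
            rel_prime n d /\ rel_prime r d /\ curveZ n r d = 0.
Proof.
rewrite /clearedE => hm hs hnm hrs /Z.sub_move_0_r heq.
have rel_s : rel_prime (s ^ 2) (r^2 + 11*r*s).
  apply: rel_prime_sym; apply: rel_prime_Zpower_r; first lia.
  have -> : r^2 + 11*r*s = r * (r + 11*s) by ring.
  apply: rel_prime_sym; apply: rel_prime_mult; apply: rel_prime_sym => //.
  by apply/Zgcd_1_rel_prime; rewrite Z.gcd_comm Z.gcd_add_mult_diag_r Z.gcd_comm;
     apply/Zgcd_1_rel_prime.
have rel_m : rel_prime (m ^ 3) (n^3 + 11*n^2* m + 33*n* m^2).
  apply: rel_prime_sym; apply: rel_prime_Zpower_r; first lia.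
  have -> : n^3 + 11*n^2* m + 33*n* m^2 = n^3 + (11*n^2 + 33*n* m) * m by ring.
  apply/Zgcd_1_rel_prime; rewrite Z.gcd_comm Z.gcd_add_mult_diag_r.
  by apply/Zgcd_1_rel_prime; apply: rel_prime_Zpower_r; [lia | apply: rel_prime_sym].
have hms : m^3 = s^2.
  apply: Z.divide_antisym_nonneg; try (apply: Z.pow_nonneg; lia).
  - apply: (Gauss _ _ _ _ rel_m); rewrite Z.mul_comm -heq.
    by apply: Z.divide_mul_l; apply: Z.divide_refl.
  - apply: (Gauss _ _ _ _ rel_s); rewrite Z.mul_comm heq.
    by apply: Z.divide_mul_l; apply: Z.divide_refl.
have [d [hd [em es]]] := cube_eq_square hm hs hms.
exists d; do 3 (split => //); split; [|split].
- apply: rel_prime_sym; apply: (rel_prime_div _ _ _ (rel_prime_sym _ _ hnm)).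
  by exists d; rewrite em; ring.
- apply: rel_prime_sym; apply: (rel_prime_div _ _ _ (rel_prime_sym _ _ hrs)).
  by exists (d^2); rewrite es; ring.
- subst m s.
  have : d^6 * curveZ n r d = (d^2)^3 * (r^2 + 11*r*d^3)
           - (d^3)^2 * (n^3 + 11*n^2 * d^2 + 33*n * (d^2)^2) by rewrite /curveZ; ring.
  rewrite heq Z.sub_diag => /Z.eq_mul_0 [h6|//].
  by have := Z.pow_nonzero d 6; lia.
Qed.

Local Close Scope Z_scope.
Local Open Scope ring_scope.

Definition zr (z : Z) : rat := (int_of_Z z)%:~R.

Lemma zrD x y : zr (Z.add x y) = zr x + zr y.
Proof. by rewrite /zr (rmorphD int_of_Z x y) intrD. Qed.

Lemma zrM x y : zr (Z.mul x y) = zr x * zr y.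
Proof. by rewrite /zr (rmorphM int_of_Z x y) intrM. Qed.

Lemma zrB x y : zr (Z.sub x y) = zr x - zr y.
Proof. by rewrite /zr (rmorphB int_of_Z x y) intrB. Qed.

Lemma zr_pow x (p : positive) : zr (Z.pow x (Zpos p)) = zr x ^+ Pos.to_nat p.
Proof.
rewrite -positive_nat_Z; elim: (Pos.to_nat p) => [|n IH]; first by rewrite expr0.
by rewrite Nat2Z.inj_succ Z.pow_succ_r ?zrM ?IH ?exprS //; lia.
Qed.

Lemma posqE p : posq p = (Pos.to_nat p)%:R.
Proof.
elim: p => [p IH|p IH|] //=.
- have -> : Pos.to_nat p~1 = (2 * Pos.to_nat p)%N.+1 by lia.
  by rewrite IH -[(_ * _)%N.+1]addn1 natrD natrM.
- have -> : Pos.to_nat p~0 = (2 * Pos.to_nat p)%N by lia.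
  by rewrite IH natrM.
Qed.

Lemma zr_pos p : zr (Zpos p) = posq p.
Proof. by rewrite posqE /zr /=. Qed.

Lemma zr_inj : injective zr.
Proof. by move=> x y /intr_inj/(can_inj int_of_ZK). Qed.

Lemma zr_eq0 x : (zr x == 0) = (x == Z0).
Proof. by apply/eqP/eqP => [h|->] //; apply: zr_inj; rewrite h. Qed.

Lemma rat_int_div (p q : Z) : q <> Z0 -> (zr p / zr q \is a Num.int) <-> Z.divide q p.
Proof.
move=> q0; have zq : zr q != 0 by rewrite zr_eq0; apply/eqP.
split=> [/intrP [k hk]|[k ->]]; last by rewrite zrM mulfK // intr_int.
exists (Z_of_int k); apply: zr_inj.
by rewrite zrM {2}/zr Z_of_intK -hk divfK.
Qed.

(* Compute the unary exponents produced by [zr_pow]. *)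
Ltac reduce_exponents :=
  repeat match goal with |- context [Pos.to_nat ?p] =>
    let n := eval vm_compute in (Pos.to_nat p) in change (Pos.to_nat p) with n
  end.

Ltac field_nonzero := field; by repeat (apply/andP; split).

(* Prove an identity between rational functions of [zr]-images of integers:
   push [zr] inside the polynomial expressions over Z, turn the small
   constants that occur as numerals in the statement into numerals of Q,
   abstract the remaining large binary constants as opaque parameters, and
   conclude by [field]. *)
Ltac zr_field :=
  rewrite ?(zrD, zrM, zrB, zr_pow, zr_pos)
          ?(posqE 2) ?(posqE 11) ?(posqE 22) ?(posqE 33) ?(posqE 55)
          ?(posqE 88) ?(posqE 121) ?(posqE 451);
  reduce_exponents;
  repeat match goal with |- context [posq ?p] =>
    let c := fresh "c" in generalize (posq p) => c
  end;
  field_nonzero.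

Section Evaluation.

Variables a b d : Z.
Hypothesis hd : zr d != 0.
Local Notation X := (zr a / zr d ^+ 2).
Local Notation Y := (zr b / zr d ^+ 3).

Lemma den_eval : X * Y - 11 = zr (denZ a b d) / zr d ^+ 5.
Proof. rewrite /denZ; zr_field. Qed.

Lemma h_eval : h_poly X Y = zr (hZ a b d) / zr d ^+ 55.
Proof.
have f1_eval : X ^+ 2 + 11 * X + 22 = zr (f1Z a d) / zr d ^+ 4.
  by rewrite /f1Z; zr_field.
have f2_eval : (11 * X ^+ 2 + 88 * X + 121) * Y + 2 * X ^+ 4 + 55 * X ^+ 3
    + 451 * X ^+ 2 + nq 1452 * X + nq 1452 = zr (f2Z a b d) / zr d ^+ 8.
  by rewrite /f2Z /nq; zr_field.
have g_eval : g_poly X Y = zr (gZ a b d) / zr d ^+ 19.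
  by rewrite /gZ /g_poly /nq; zr_field.
have zr_hZ : zr (hZ a b d) = zr (f1Z a d) ^+ 3 * zr (f2Z a b d) ^+ 3 * zr (gZ a b d).
  by rewrite /hZ; move: (f1Z a d) (f2Z a b d) (gZ a b d) => u v w; rewrite 2!zrM !zr_pow.
rewrite /h_poly f1_eval f2_eval g_eval zr_hZ.
move: (zr (f1Z a d)) (zr (f2Z a b d)) (zr (gZ a b d)) => u v w.
field_nonzero.
Qed.

Lemma j_eval : zr (denZ a b d) != 0 ->
  j_val X Y = zr (hZ a b d) / zr (Z.pow (denZ a b d) 11).
Proof.
move=> hT; rewrite /j_val h_eval den_eval zr_pow; reduce_exponents.
field_nonzero.
Qed.

Lemma u_eval : zr (denZ a b d) != 0 ->
  X / (X * Y - 11) = zr (Z.mul a (Z.pow d 3)) / zr (denZ a b d).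
Proof.
move=> hT; rewrite den_eval zrM zr_pow; reduce_exponents.
field_nonzero.
Qed.

End Evaluation.

Lemma rational_point_model x y : onE x y ->
  exists a b d : Z, rel_prime a d /\ rel_prime b d /\ curveZ a b d = Z0 /\
                    zr d != 0 /\ x = zr a / zr d ^+ 2 /\ y = zr b / zr d ^+ 3.
Proof.
move=> hE.
have lowest_terms (q : rat) : exists n m : Z, [/\ q = zr n / zr m, Z.lt Z0 m & rel_prime n m].
  exists (Z_of_int (numq q)), (Z_of_int (denq q)).
  split; first by rewrite /zr !Z_of_intK divq_num_den.
    by have := denq_gt0 q; lia.
  apply/Zgcd_1_rel_prime; have /eqP := coprime_num_den q.
  by rewrite -Z.gcd_abs_l -Z.gcd_abs_r; lia.
have [n [m [hx hm hnm]]] := lowest_terms x.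
have [r [s [hy hs hrs]]] := lowest_terms y.
have zm : zr m != 0 by rewrite zr_eq0; apply/eqP; lia.
have zs : zr s != 0 by rewrite zr_eq0; apply/eqP; lia.
have heq : clearedE n m r s = Z0.
  apply: zr_inj; have -> : zr (clearedE n m r s) = zr m ^+ 3 * zr s ^+ 2 *
      ((y ^+ 2 + 11 * y) - (x ^+ 3 + 11 * x ^+ 2 + 33 * x)).
    by rewrite hx hy /clearedE; zr_field.
  by rewrite hE subrr mulr0.
have [d [hd [em [es [hnd [hrd hEd]]]]]] := integral_model hm hs hnm hrs heq.
exists n, r, d; do 3 (split=> //); split; first by rewrite zr_eq0; apply/eqP; lia.
by rewrite hx hy em es !zr_pow.
Qed.

Theorem theorem4p1 (x y : rat) :
  onE x y -> (j_integral x y <-> u_integral x y).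
Proof.
move=> /rational_point_model [a [b [d [had [hbd [hE [hd [-> ->]]]]]]]].
rewrite /j_integral /u_integral.
have [T0|T0] := eqVneq (denZ a b d) Z0.
  by rewrite den_eval // T0 mul0r; split; case.
have zT : zr (denZ a b d) != 0 by rewrite zr_eq0.
have T11 : Z.pow (denZ a b d) 11 <> Z0 by apply: Z.pow_nonzero => //; apply/eqP.
rewrite j_eval // u_eval // !rat_int_div //; last exact/eqP.
by rewrite denZ_pow_dvd_hZ_iff.
Qed.
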